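(* If $G$ is a tree with $|V(G)| \ge 3$, then $\det(G) = \det'(G)$.
   Context: A vertex subset $S$ of $G$ is a vertex determining set if the only automorphism of $G$ fixing every vertex of $S$ is the identity; the determining number $\det(G)$ is the minimum size of a vertex determining set. For a graph $G$ with at most one isolated vertex and no component isomorphic to $K_2$, an edge subset $T$ is an edge determining set if the only automorphism $\phi$ of $G$ satisfying $\{\phi(u),\phi(v)\}=\{u,v\}$ for all $\{u,v\}\in T$ is the identity; the determining index $\det'(G)$ is the minimum size of an edge determining set. *)

From mathcomp Require Import all_boot all_fingroup.
Set Implicit Arguments. Unset Strict Implicit. Unset Printing Implicit Defensive.

Definition simple_graph (T : finType) (e : rel T) : Prop :=
  symmetric e /\ irreflexive e.

Definition connected_graph (T : finType) (e : rel T) : Prop :=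
  forall x y : T, connect e x y.

Definition has_cycle (T : finType) (e : rel T) : Prop :=
  exists (x : T) (p : seq T),
    [/\ 2 <= size p, path e x p, uniq (x :: p) & e (last x p) x].

Definition is_tree (T : finType) (e : rel T) : Prop :=
  simple_graph e /\ connected_graph e /\ ~ has_cycle e.

Definition is_aut (T : finType) (e : rel T) (phi : {perm T}) : bool :=
  [forall x : T, forall y : T, e (phi x) (phi y) == e x y].

Definition vdet_set (T : finType) (e : rel T) (S : {set T}) : bool :=
  [forall phi : {perm T},
     (is_aut e phi && [forall x in S, phi x == x]) ==> (phi == 1%g)].

Definition det_number (T : finType) (e : rel T) : nat :=
  \big[minn/#|T|]_(S : {set T} | vdet_set e S) #|S|.

Definition is_edge (T : finType) (e : rel T) (A : {set T}) : bool :=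
  [exists u : T, exists v : T, e u v && (A == [set u; v])].

Definition edet_set (T : finType) (e : rel T) (D : {set {set T}}) : bool :=
  [forall A in D, is_edge e A] &&
  [forall phi : {perm T},
     (is_aut e phi &&
      [forall u : T, forall v : T,
         ([set u; v] \in D) ==> ([set phi u; phi v] == [set u; v])])
     ==> (phi == 1%g)].

Definition det_index (T : finType) (e : rel T) : nat :=
  \big[minn/#|{set T}|]_(D : {set {set T}} | edet_set e D) #|D|.

From mathcomp Require Import all_boot all_fingroup zify.
Set Implicit Arguments. Unset Strict Implicit. Unset Printing Implicit Defensive.

(* Root the tree at a vertex r of minimal eccentricity. Central vertices are
   pairwise adjacent, hence at most two, so every automorphism fixes r, or
   fixes or swaps an edge r r'. Each vertex s <> r determines the edge to its
   parent, and each edge determines its endpoint farther from r. An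
   automorphism fixing r fixes the path from r to any fixed vertex and flips no
   edge, so these maps turn vertex determining sets into edge determining sets
   and back without increasing the size. In the bicentral case the swap of r
   and r' must be excluded too: a single edge leaving {r, r'}, which exists as
   soon as |V| >= 3, does this. *)

Section InducedRelation.
Variables (T : finType) (e : rel T) (P : pred T).

Definition induced := [rel u v | [&& e u v, P u & P v]].

Lemma induced_sym : symmetric e -> symmetric induced.
Proof. by move=> sym_e u v; rewrite /= sym_e; case: (P u); case: (P v); rewrite ?andbF. Qed.

Lemma induced_path z s : P z -> path induced z s = path e z s && all P s.
Proof.
elim: s z => [|b s IH] z Pz //=.
case Pb: (P b); last by rewrite !andbF.
by rewrite Pz IH // !andbT andbA.
Qed.

End InducedRelation.

Lemma all_predC1 (T : eqType) (x : T) s : all (predC1 x) s = (x \notin s).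
Proof. by rewrite all_predC has_pred1. Qed.

Lemma perm_set2 (T : finType) (phi : {perm T}) u v :
  [set phi u; phi v] = [set u; v] ->
  (phi u = u /\ phi v = v) \/ (phi u = v /\ phi v = u).
Proof.
move=> h.
have : phi u \in [set u; v] by rewrite -h !inE eqxx.
have : phi v \in [set u; v] by rewrite -h !inE eqxx orbT.
rewrite !inE => /orP[/eqP hv|/eqP hv] /orP[/eqP hu|/eqP hu].
- have vu : v = u by apply: (@perm_inj _ phi); rewrite hu hv.
  by left; subst v.
- by right.
- by left.
- have uv : u = v by apply: (@perm_inj _ phi); rewrite hu hv.
  by left; subst u.
Qed.

Section DeterminingSets.
Variables (T : finType) (e : rel T).

Lemma autE (phi : {perm T}) : is_aut e phi -> forall x y, e (phi x) (phi y) = e x y.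
Proof. by move=> /forallP aut x y; move/forallP: (aut x) => /(_ y) /eqP. Qed.

Lemma is_edgeP (A : {set T}) : reflect (exists u v, e u v /\ A = [set u; v]) (is_edge e A).
Proof.
apply: (iffP existsP) => [[u /existsP[v /andP[euv /eqP ->]]]|[u [v [euv ->]]]].
  by exists u, v.
by exists u; apply/existsP; exists v; rewrite euv eqxx.
Qed.

Lemma vdetP (S : {set T}) :
  reflect (forall phi, is_aut e phi -> {in S, forall x, phi x = x} -> phi = 1%g)
          (vdet_set e S).
Proof.
apply: (iffP forallP) => [h phi aut fixS|h phi]; last first.
  by apply/implyP => /andP[aut /forall_inP fixS]; apply/eqP/h => // x /fixS /eqP.
by apply/eqP; move/implyP: (h phi); apply; rewrite aut; apply/forall_inP => x /fixS ->.
Qed.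

Lemma edetP (D : {set {set T}}) :
  reflect ({in D, forall A, is_edge e A} /\
           forall phi, is_aut e phi ->
             (forall u v, [set u; v] \in D -> [set phi u; phi v] = [set u; v]) ->
             phi = 1%g)
          (edet_set e D).
Proof.
apply: (iffP andP) => [[/forall_inP edges /forallP h]|[edges h]].
  split=> // phi aut fixD; apply/eqP; move/implyP: (h phi); apply; rewrite aut.
  by apply/forallP => u; apply/forallP => v; apply/implyP => /fixD ->.
split; first exact/forall_inP.
apply/forallP => phi; apply/implyP => /andP[aut /forallP fixD]; apply/eqP/h => // u v uvD.
by move/forallP: (fixD u) => /(_ v) /implyP /(_ uvD) /eqP.
Qed.

End DeterminingSets.

Section Tree.
Variables (T : finType) (e : rel T).
Hypotheses (sym_e : symmetric e) (irr_e : irreflexive e)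
  (conn_e : forall x y, connect e x y) (acyclic_e : ~ has_cycle e).

Lemma no_detour x a b : e x a -> e x b -> a != b ->
  ~~ connect (induced e (predC1 x)) a b.
Proof.
move=> exa exb ab; apply/negP => /connectP[r rpath rlast].
case: (shortenP rpath) rlast => s spath suniq _ slast.
have ax : a != x by apply: contraTneq exa => ->; rewrite irr_e.
move: spath; rewrite induced_path // all_predC1 => /andP[spath xs].
apply: acyclic_e; exists x, (a :: s); split.
- by case: s slast {spath suniq xs} => [/= ba|//]; rewrite ba eqxx in ab.
- by rewrite /= exa spath.
- by rewrite cons_uniq suniq inE negb_or eq_sym ax xs.
- by rewrite /= -slast sym_e.
Qed.

Definition simple_path x p y := [&& path e x p, uniq (x :: p) & last x p == y].

Lemma simple_path_exists x y : exists p, simple_path x p y.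
Proof.
have /connectP[p pp ->] := conn_e x y.
by case: (shortenP pp) => q qp qu _; exists q; rewrite /simple_path qp qu eqxx.
Qed.

Lemma simple_path_unique x y p q : simple_path x p y -> simple_path x q y -> p = q.
Proof.
elim: p q x => [|a p IH] [|b q] x /and3P[/= pp up /eqP lp] /and3P[/= pq uq /eqP lq] //.
- by move: uq; rewrite lp -lq mem_last.
- by move: up; rewrite lq -lp mem_last.
move: pp up pq uq => /andP[xa pp] /andP[xap up] /andP[xb pq] /andP[xbq uq].
case: (eqVneq a b) => [ab|ab].
  by subst b; congr (_ :: _); apply: (IH q a); rewrite /simple_path /= ?pp ?pq ?up ?uq ?lp ?lq eqxx.
move: xap xbq; rewrite !inE !negb_or ![x == _]eq_sym => /andP[ax xp] /andP[bx xq].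
case/negP: (no_detour xa xb ab).
have ay : connect (induced e (predC1 x)) a y.
  by apply/connectP; exists p; rewrite ?induced_path // ?pp ?all_predC1.
have by' : connect (induced e (predC1 x)) b y.
  by apply/connectP; exists q; rewrite ?induced_path // ?pq ?all_predC1.
by rewrite (connect_trans ay) // (sym_connect_sym (induced_sym _ sym_e)).
Qed.

Definition tpath x y := xchoose (simple_path_exists x y).
Definition dist x y := size (tpath x y).

Lemma tpathP x y : simple_path x (tpath x y) y.
Proof. exact: (xchooseP (simple_path_exists x y)). Qed.

Lemma tpath_path x y : path e x (tpath x y).
Proof. by case/and3P: (tpathP x y). Qed.

Lemma tpath_uniq x y : uniq (x :: tpath x y).
Proof. by case/and3P: (tpathP x y). Qed.

Lemma tpath_last x y : last x (tpath x y) = y.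
Proof. by case/and3P: (tpathP x y) => _ _ /eqP. Qed.

Lemma mem_tpath_last x y : y \in x :: tpath x y.
Proof. by rewrite -{1}(tpath_last x y) mem_last. Qed.

Lemma tpath_unique x p y : simple_path x p y -> tpath x y = p.
Proof. exact: simple_path_unique (tpathP x y). Qed.

Lemma tpath_refl x : tpath x x = [::].
Proof. by apply: tpath_unique; rewrite /simple_path /= eqxx. Qed.

Lemma dist_eq0 x y : (dist x y == 0) = (x == y).
Proof.
apply/eqP/eqP => [/size0nil p0|->]; last by rewrite /dist tpath_refl.
by rewrite -(tpath_last x y) p0.
Qed.

Lemma tpath_cat x y z : z \in x :: tpath x y -> tpath x y = tpath x z ++ tpath z y.
Proof.
move=> zin; have := tpathP x y; case/splitPl: zin => p1 p2 lz; rewrite /simple_path.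
rewrite cat_path -cat_cons cat_uniq last_cat => /and3P[/andP[p1p p2p] /and3P[u1 hn u2] /eqP ly].
have zp2 : z \notin p2 by apply: contra hn => zp2; apply/hasP; exists z; rewrite // -lz mem_last.
rewrite (@tpath_unique x p1 z) ?(@tpath_unique z p2 y) // /simple_path.
  by rewrite lz in p2p ly; rewrite /= p2p zp2 u2 ly eqxx.
by rewrite p1p u1 lz eqxx.
Qed.

Lemma dist_tpath x y z : z \in x :: tpath x y -> dist x y = dist x z + dist z y.
Proof. by move=> /tpath_cat; rewrite /dist => ->; rewrite size_cat. Qed.

Lemma tpath_edge1 x y : e x y -> tpath x y = [:: y].
Proof.
move=> exy; apply: tpath_unique; rewrite /simple_path /= exy eqxx !andbT inE.
by apply: contraTneq exy => ->; rewrite irr_e.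
Qed.

Lemma dist_eq1 x y : (dist x y == 1) = e x y.
Proof.
apply/idP/idP => [|/tpath_edge1]; last by rewrite /dist => ->.
have := tpath_path x y; have := tpath_last x y; rewrite /dist.
by case: (tpath x y) => [|a [|//]] //= -> /andP[].
Qed.

Lemma tpath_edge w u v : e u v ->
  tpath w v = rcons (tpath w u) v \/ tpath w u = rcons (tpath w v) u.
Proof.
move=> euv; have [vin|vnot] := boolP (v \in w :: tpath w u).
  have evu : e v u by rewrite sym_e.
  by right; rewrite (tpath_cat vin) (tpath_edge1 evu) cats1.
left; apply: tpath_unique; rewrite /simple_path rcons_path tpath_path tpath_last euv.
by rewrite -rcons_cons rcons_uniq vnot tpath_uniq last_rcons eqxx.
Qed.

Lemma dist_edge_neq w u v : e u v -> dist w u != dist w v.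
Proof. by rewrite /dist; case/(tpath_edge w) => ->; rewrite size_rcons; lia. Qed.

Lemma tpath_rev x y : y :: tpath y x = rev (x :: tpath x y).
Proof.
have ly := tpath_last x y; set p := tpath x y in ly *.
have rev_p : y :: rev (belast x p) = rev (x :: p) by rewrite [x :: p]lastI rev_rcons ly.
rewrite -rev_p (@tpath_unique y (rev (belast x p)) x) // /simple_path rev_p rev_uniq.
rewrite tpath_uniq -(last_cons y y) rev_p rev_cons last_rcons eqxx andbT.
rewrite -ly rev_path andbT; apply: sub_path (tpath_path x y) => a b; by rewrite sym_e.
Qed.

Lemma dist_sym x y : dist x y = dist y x.
Proof. by have /(congr1 size) := tpath_rev x y; rewrite size_rev => -[]. Qed.

Lemma mem_tpath_rev x y z : (z \in y :: tpath y x) = (z \in x :: tpath x y).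
Proof. by rewrite tpath_rev mem_rev. Qed.

Section Automorphism.
Variable phi : {perm T}.
Hypothesis aut : is_aut e phi.

Lemma aut_tpath x y : tpath (phi x) (phi y) = map phi (tpath x y).
Proof.
apply: tpath_unique; rewrite /simple_path -map_cons map_inj_uniq ?tpath_uniq; last exact: perm_inj.
rewrite last_map tpath_last eqxx path_map andbT.
by rewrite (@eq_path _ _ e) ?tpath_path // => a b; apply: autE.
Qed.

Lemma aut_dist x y : dist (phi x) (phi y) = dist x y.
Proof. by rewrite /dist aut_tpath size_map. Qed.

Lemma aut_fix_tpath x y : phi x = x -> phi y = y ->
  {in x :: tpath x y, forall z, phi z = z}.
Proof.
move=> fx fy; have := aut_tpath x y; rewrite fx fy => /esym.
move: (tpath x y) => s fs z; rewrite inE => /predU1P[->//|].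
by elim: s fs => [//|a s IH] /= [fa /IH]; rewrite inE => fs /predU1P[->|].
Qed.

Lemma aut_fix_edge w u v : phi w = w -> e u v ->
  [set phi u; phi v] = [set u; v] -> phi u = u /\ phi v = v.
Proof.
move=> fw euv /perm_set2[//|[fu fv]].
by move: (dist_edge_neq w euv); rewrite -(aut_dist w u) fw fu eqxx.
Qed.

End Automorphism.

Lemma tpath_sub_detour x y w : {subset tpath x y <= tpath x w ++ tpath w y}.
Proof.
set q := tpath x w ++ tpath w y.
have qpath : path e x q by rewrite cat_path tpath_path tpath_last tpath_path.
have : y = last x q by rewrite last_cat tpath_last tpath_last.
case: (shortenP qpath) => p ppath puniq psub ly.
by rewrite (@tpath_unique x p y) // /simple_path ppath puniq ly eqxx.
Qed.

Lemma dist_inner_tpath w x y z : z \in tpath x y -> z != y ->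
  dist w z < maxn (dist w x) (dist w y).
Proof.
move=> zxy zy; have zx : z != x.
  by apply: contraTneq zxy => ->; case/andP: (tpath_uniq x y).
have := tpath_sub_detour w zxy; rewrite mem_cat => /orP[zxw|zwy].
  have zwx : z \in w :: tpath w x by rewrite -mem_tpath_rev inE zxw orbT.
  have := dist_tpath zwx; have : dist z x != 0 by rewrite dist_eq0.
  lia.
have zwy' : z \in w :: tpath w y by rewrite inE zwy orbT.
have := dist_tpath zwy'; have : dist z y != 0 by rewrite dist_eq0.
lia.
Qed.

Definition ecc v := \max_(w : T) dist w v.
Definition central v := [forall w, ecc v <= ecc w].

Lemma dist_le_ecc w v : dist w v <= ecc v.
Proof. exact: (@leq_bigmax T (dist^~ v)). Qed.

Lemma central_aut phi v : is_aut e phi -> central (phi v) = central v.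
Proof.
move=> aut; suff ecc_phi u : ecc (phi u) = ecc u by rewrite /central ecc_phi.
rewrite /ecc (reindex_inj (@perm_inj _ phi)) /=.
by apply: eq_bigr => w _; apply: aut_dist.
Qed.

Lemma central_adj x y : central x -> central y -> x != y -> e x y.
Proof.
move=> cx cy xy; rewrite -dist_eq1.
have exy : ecc x = ecc y by apply/eqP; rewrite eqn_leq (forallP cx y) (forallP cy x).
have := tpath_uniq x y; have := tpath_last x y; rewrite /dist.
case def_p: (tpath x y) => [|z [//|b p]] /=; first by move=> yx; rewrite yx eqxx in xy.
(* the first inner vertex z of the path from x to y has smaller eccentricity *)
move=> ly /and4P[_ zbp _ _].
have zy : z != y by rewrite -ly; apply: contraNneq zbp => ->; apply: mem_last.
have [w ecc_z] : {w | ecc z = dist w z} by apply: eq_bigmax; apply/card_gt0P; exists z.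
have zxy : z \in tpath x y by rewrite def_p mem_head.
have := dist_inner_tpath w zxy zy; rewrite -ecc_z => lt_z.
suff : ecc z < ecc x by rewrite ltnNge (forallP cx z).
by apply: leq_trans lt_z _; rewrite geq_max {2}exy !dist_le_ecc.
Qed.

Lemma central_pair a b c : central a -> central b -> central c -> a != b ->
  c = a \/ c = b.
Proof.
move=> ca cb cc ab; case: (eqVneq c a) => [|ca']; [by left|].
case: (eqVneq c b) => [|cb']; [by right|].
exfalso; apply: acyclic_e; exists a, [:: b; c]; split => //.
- by rewrite /= !central_adj // eq_sym.
- by rewrite /= !inE !negb_or ab eq_sym ca' eq_sym cb'.
- by rewrite /= central_adj.
Qed.

Lemma tree_center (x0 : T) : exists r,
  (forall phi, is_aut e phi -> phi r = r) \/
  exists2 r', e r r' & forall phi, is_aut e phi ->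
    (phi r = r /\ phi r' = r') \/ (phi r = r' /\ phi r' = r).
Proof.
have [r _ min_r] := arg_minnP ecc (isT : predT x0).
have cr : central r by apply/forallP => w; apply: min_r.
exists r; case: (pickP [pred c | central c & c != r]) => [r' /andP[cr' r'r]|none].
  right; exists r'; first by apply: central_adj; rewrite // eq_sym.
  move=> phi aut; have phi_r'r : phi r != phi r' by rewrite (inj_eq perm_inj) eq_sym.
  have [cphi_r cphi_r'] : central (phi r) /\ central (phi r') by rewrite !central_aut.
  case: (central_pair cr' cr cphi_r r'r) => h1; case: (central_pair cr' cr cphi_r' r'r) => h2;
    rewrite h1 h2 in phi_r'r *; by [left | right | rewrite eqxx in phi_r'r].
left => phi aut; apply/eqP; move: (none (phi r)) => /= /negbT.
by rewrite central_aut // cr negbK.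
Qed.

Lemma aut_flip_edges phi x y u v : is_aut e phi -> e x y -> phi x = y -> phi y = x ->
  e u v -> phi u = v -> phi v = u -> u = x \/ u = y.
Proof.
move=> aut exy fx fy.
suff near_x a b : e a b -> phi a = b -> phi b = a ->
    tpath x b = rcons (tpath x a) b -> a = x.
  move=> euv fu fv; case: (tpath_edge x euv) => [/(near_x u v euv fu fv)|]; first by left.
  have evu : e v u by rewrite sym_e.
  by move/(near_x v u evu fv fu) => vx; right; rewrite -fv vx fx.
(* With a nearer to x than b, the vertex y = phi x is forced onto the path
   from x to b, which leaves room only for a = x. *)
move=> eab fa fb xab.
have dxb : dist x b = (dist x a).+1 by rewrite /dist xab size_rcons.
have dyb : dist y b = dist x a by rewrite -(aut_dist aut x a) fx fa.
have dya : dist y a = dist x b by rewrite -(aut_dist aut x b) fx fb.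
have : y \in x :: tpath x b.
  rewrite -mem_tpath_rev; have eyx : e y x by rewrite sym_e.
  case: (tpath_edge b eyx) => [->|byx].
    by rewrite -rcons_cons mem_rcons inE mem_tpath_last orbT.
  have := congr1 size byx; rewrite size_rcons -/(dist b y) -/(dist b x).
  by rewrite dist_sym [dist b x]dist_sym dyb dxb; lia.
rewrite xab -rcons_cons mem_rcons inE => /predU1P[yb|ya].
  by apply/eqP; rewrite eq_sym -dist_eq0 -dyb yb dist_eq0.
have := dist_tpath ya; have /eqP := dist_eq1 x y; rewrite exy dya dxb; lia.
Qed.

Lemma edge_leaving_pair r r' : e r r' -> 2 < #|T| ->
  exists u v, [/\ e u v, u \in [set r; r'] & v \notin [set r; r']].
Proof.
move=> err' T3; have /subsetPn[z _] : ~~ ([set: T] \subset [set r; r']).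
  apply: contraL T3 => /subset_leq_card; rewrite cardsT cards2 -leqNgt => T_le.
  by apply: leq_trans T_le _; case: (_ != _).
rewrite !inE negb_or => /andP[zr zr'].
have := tpath_path r z; have := tpath_uniq r z; have := tpath_last r z.
case: (tpath r z) => [/= rz|a [|b q]]; first by rewrite rz eqxx in zr.
- move=> /= az _ /andP[era _]; subst z.
  by exists r, a; rewrite !inE eqxx era negb_or zr zr'.
- move=> /= _ /andP[rn _] /and3P[era eab _]; move: rn; rewrite !inE !negb_or.
  case/and3P=> rr' rb _; have [ar'|ar'] := eqVneq a r'.
    subst a; exists r', b; rewrite !inE eqxx orbT eab negb_or eq_sym rb.
    by split=> //; apply: contraTneq eab => ->; rewrite irr_e.
  by exists r, a; rewrite !inE eqxx era negb_or ar' andbT (eq_sym a).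
Qed.

Definition parent r s := head r (tpath s r).

Lemma parentP r s : s != r -> e s (parent r s) /\ dist r (parent r s) < dist r s.
Proof.
rewrite /parent => sr; case def_p: (tpath s r) => [|u q] /=.
  by move: (tpath_last s r); rewrite def_p => /= sr'; rewrite sr' eqxx in sr.
have esu : e s u by move: (tpath_path s r); rewrite def_p => /andP[].
have us : u \in s :: tpath s r by rewrite def_p !inE eqxx orbT.
have := tpath_cat us; rewrite def_p (tpath_edge1 esu) => -[q_eq].
by rewrite !(dist_sym r) /dist def_p q_eq.
Qed.

Definition parent_edges r (S : {set T}) := [set [set s; parent r s] | s in S :\ r].

Lemma parent_edges_edge r S : {in parent_edges r S, forall A, is_edge e A}.
Proof.
move=> _ /imsetP[s /setD1P[sr _] ->]; apply/is_edgeP.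
by exists s, (parent r s); case: (parentP sr).
Qed.

Lemma card_parent_edges r S : #|parent_edges r S| <= #|S|.
Proof. exact: leq_trans (leq_imset_card _ _) (subset_leq_card (subD1set S r)). Qed.

Lemma parent_edges_fix r S phi : is_aut e phi -> phi r = r ->
  (forall u v, [set u; v] \in parent_edges r S -> [set phi u; phi v] = [set u; v]) ->
  {in S, forall s, phi s = s}.
Proof.
move=> aut fr fixD s sS; have [->//|sr] := eqVneq s r.
have [esp _] := parentP sr.
suff /fixD/(aut_fix_edge aut fr esp)[] : [set s; parent r s] \in parent_edges r S by [].
by apply/imsetP; exists s; rewrite // in_setD1 sr.
Qed.

Lemma edet_of_vdet_in_center r r' (S : {set T}) : e r r' -> 2 < #|T| ->
  (forall phi, is_aut e phi -> (phi r = r /\ phi r' = r') \/ (phi r = r' /\ phi r' = r)) ->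
  S \subset [set r; r'] -> vdet_set e S -> exists2 D, edet_set e D & #|D| <= #|S|.
Proof.
move=> err' T3 r_stab Sr /vdetP detS.
have [S0|[s sS]] := set_0Vmem S.
  exists set0; rewrite ?cards0 //; apply/edetP; split=> [A|phi aut _]; first by rewrite inE.
  by apply: detS aut _ => x; rewrite S0 inE.
have rr' : r != r' by apply: contraTneq err' => ->; rewrite irr_e.
have [u [v [euv ur vr]]] := edge_leaving_pair err' T3.
exists [set [set u; v]]; last by rewrite cards1 card_gt0; apply/set0Pn; exists s.
apply/edetP; split=> [A /set1P->|phi aut fixuv]; first by apply/is_edgeP; exists u, v.
have /perm_set2 := fixuv u v (set11 _).
case: (r_stab phi aut) => [[fr fr'] _|[fr fr'] [[fu _]|[fu _]]].
- by apply: detS aut _ => x /(subsetP Sr); rewrite !inE => /orP[]/eqP->.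
- by move: ur rr'; rewrite !inE => /orP[]/eqP ue; rewrite ue ?fr ?fr' in fu; rewrite fu eqxx.
- by move: ur vr; rewrite !inE => /orP[]/eqP ue; rewrite -fu ue ?fr ?fr' eqxx ?orbT.
Qed.

Lemma edet_of_vdet (S : {set T}) : 2 < #|T| -> vdet_set e S ->
  exists2 D, edet_set e D & #|D| <= #|S|.
Proof.
move=> T3 detS; have /card_gt0P[x0 _] : 0 < #|T| by apply: leq_ltn_trans T3.
have [r r_center] := tree_center x0.
have parent_edges_det : (forall phi, is_aut e phi ->
      (forall u v, [set u; v] \in parent_edges r S -> [set phi u; phi v] = [set u; v]) ->
      phi r = r) ->
    exists2 D, edet_set e D & #|D| <= #|S|.
  move=> r_fix; exists (parent_edges r S); last exact: card_parent_edges.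
  apply/edetP; split=> [|phi aut fixD]; first exact: parent_edges_edge.
  exact: (vdetP _ _ detS) aut (parent_edges_fix aut (r_fix phi aut fixD) fixD).
case: r_center => [r_fix|[r' err' r_stab]]; first by apply: parent_edges_det => phi /r_fix.
have [Sr|/subsetPn[s sS]] := boolP (S \subset [set r; r']).
  exact: edet_of_vdet_in_center err' T3 r_stab Sr detS.
(* The edge from s to its parent is neither flipped (only r r' is) nor fixed
   pointwise (s would be equidistant from r and r'). *)
rewrite !inE negb_or => /andP[sr sr'].
have [esp _] := parentP sr.
apply: parent_edges_det => phi aut fixD; case: (r_stab phi aut) => [[]//|[fr fr']].
have /fixD/perm_set2 : [set s; parent r s] \in parent_edges r S.
  by apply/imsetP; exists s; rewrite // in_setD1 sr.
case=> [[fs _]|[fs fp]].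
  by move: (dist_edge_neq s err'); rewrite !(dist_sym s) -(aut_dist aut r s) fr fs eqxx.
by case: (aut_flip_edges aut err' fr fr' esp fs fp) => sE; rewrite sE eqxx in sr sr'.
Qed.

Definition far_end r (A : {set T}) :=
  odflt r [pick v in A | [exists u in A, dist r u < dist r v]].

Lemma far_endP r A : is_edge e A ->
  exists2 u, A = [set u; far_end r A] & u \in r :: tpath r (far_end r A).
Proof.
suff far u v : tpath r v = rcons (tpath r u) v -> far_end r [set u; v] = v.
  case/is_edgeP=> u [v [euv ->]]; case: (tpath_edge r euv) => [ruv|rvu].
    by exists u; rewrite far // ruv -rcons_cons mem_rcons inE mem_tpath_last orbT.
  by exists v; rewrite setUC far // rvu -rcons_cons mem_rcons inE mem_tpath_last orbT.
move=> ruv; have duv : dist r v = (dist r u).+1 by rewrite /dist ruv size_rcons.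
have v_far : [exists w in [set u; v], dist r w < dist r v].
  by apply/exists_inP; exists u; rewrite ?inE ?eqxx ?duv.
rewrite /far_end; case: pickP => [w /andP[]|/(_ v)]; last by rewrite !inE eqxx orbT v_far.
rewrite !inE => /orP[]/eqP-> // /exists_inP[w']; rewrite !inE => /orP[]/eqP->.
  by rewrite ltnn.
by rewrite duv ltnNge leqnSn.
Qed.

Lemma vdet_of_edet (D : {set {set T}}) : edet_set e D ->
  exists2 S, vdet_set e S & #|S| <= #|D|.
Proof.
case/edetP=> edges detD; have [D0|[A AD]] := set_0Vmem D.
  exists set0; rewrite ?cards0 //; apply/vdetP => phi aut _.
  by apply: detD aut _ => u v; rewrite D0 inE.
have /is_edgeP[x0 _] := edges A AD; have [r r_center] := tree_center x0.
exists (far_end r @: D); last exact: leq_imset_card.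
apply/vdetP => phi aut fixS.
have fix_far B : B \in D -> phi (far_end r B) = far_end r B by move=> BD; rewrite fixS ?imset_f.
have fr : phi r = r.
  case: r_center => [r_fix|[r' err' r_stab]]; first exact: r_fix.
  case: (r_stab phi aut) => [[]//|[fr _]].
  (* a vertex fixed by the swap of r and r' would be equidistant from both *)
  move: (dist_edge_neq (far_end r A) err').
  by rewrite !(dist_sym (far_end r A)) -(aut_dist aut r) fr fix_far // eqxx.
apply: (detD _ aut) => u v uvD; have [w uvE w_in] := far_endP r (edges _ uvD).
have fixA : {in [set u; v], forall x, phi x = x}.
  rewrite uvE => x; rewrite !inE => /orP[]/eqP->; last exact: fix_far.
  exact: (aut_fix_tpath aut fr (fix_far _ uvD)) w_in.
by rewrite !fixA // !inE eqxx ?orbT.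
Qed.

End Tree.

Section BigMin.
Variables (I : finType) (P : pred I) (F : I -> nat) (x : nat).

Lemma geq_bigmin i : P i -> \big[minn/x]_(j | P j) F j <= F i.
Proof.
move=> Pi; elim: (index_enum I) (mem_index_enum i) => [//|j s IH].
rewrite big_cons inE => /predU1P[<-|/IH]; first by rewrite Pi geq_minl.
by case: (P j) => //; apply: leq_trans (geq_minr _ _).
Qed.

Lemma bigmin_attained i0 : P i0 -> F i0 <= x ->
  exists2 i, P i & \big[minn/x]_(j | P j) F j = F i.
Proof.
move=> Pi0 Fi0; have := geq_bigmin Pi0.
pose attained v := v = x \/ exists2 i, P i & v = F i.
have [->|[i Pi ->]] : attained (\big[minn/x]_(j | P j) F j).
- apply: big_ind => [|a b|i Pi]; [by left | by rewrite /minn; case: ifP | by right; exists i].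
- by move=> x_le; exists i0; last by apply/eqP; rewrite eqn_leq x_le Fi0.
- by exists i.
Qed.

End BigMin.

Lemma leq_bigmin_transfer (I J : finType) (P : pred I) (Q : pred J) F G x y :
  (exists2 i, P i & F i <= x) -> (forall i, P i -> exists2 j, Q j & G j <= F i) ->
  \big[minn/y]_(j | Q j) G j <= \big[minn/x]_(i | P i) F i.
Proof.
move=> [i0 Pi0 Fi0] PQ; have [i Pi ->] := bigmin_attained Pi0 Fi0.
by have [j Qj Gj] := PQ i Pi; apply: leq_trans Gj; apply: geq_bigmin.
Qed.

Theorem theorem10 (T : finType) (e : rel T) :
  is_tree e -> 3 <= #|T| -> det_number e = det_index e.
Proof.
move=> [[sym_e irr_e] [conn_e acyclic_e]] T3.
have vdetT : vdet_set e [set: T].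
  by apply/vdetP => phi _ fixT; apply/permP => x; rewrite perm1 fixT ?inE.
have edet_of_vdet := edet_of_vdet sym_e irr_e conn_e acyclic_e T3.
have vdet_of_edet := vdet_of_edet sym_e irr_e conn_e acyclic_e.
apply/eqP; rewrite eqn_leq; apply/andP; split; apply: leq_bigmin_transfer => //.
- have [D detD leD] := edet_of_vdet _ vdetT; exists D => //.
  rewrite (leq_trans leD) // cardsT -(card_imset _ (@set1_inj T)); exact: max_card.
- by exists [set: T]; rewrite ?cardsT.
Qed.
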